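(* Let $C$ be a unital composition algebra over a field $F$ of characteristic zero. Then $\mathrm{rb}(C)=1$ if $C$ is a division algebra or $\dim C\le2$, and $\mathrm{rb}(C)=3$ if $C$ is split and $\dim C\in\{4,8\}$.
   Context: An algebra $A$ over $F$ ($\mathrm{char}\,F\ne2$) is a composition algebra if there is a nondegenerate quadratic form $n$ on $A$ with $n(xy)=n(x)n(y)$ for all $x,y$; a unital one has dimension 1, 2, 4 or 8, and it is split if $n(x)=0$ for some nonzero $x$, otherwise it is a division algebra. A linear operator $R$ on $A$ is a Rota–Baxter operator of weight $0$ if $R(x)R(y)=R(R(x)y+xR(y))$ for all $x,y$. The RB-index $\mathrm{rb}(A)$ is the least $n\in\mathbb N$ such that $R^n=0$ for every Rota–Baxter operator $R$ of weight zero on $A$. *)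

From HB Require Import structures.
From mathcomp Require Import all_boot all_order all_algebra.
Set Implicit Arguments. Unset Strict Implicit. Unset Printing Implicit Defensive.
Import GRing.Theory.
Local Open Scope ring_scope.

Section CompositionAlgebra.
Variables (F : fieldType) (V : vectType F).

Definition bilinear_mul (mul : V -> V -> V) : Prop :=
  (forall (a : F) (x y z : V), mul (a *: x + y) z = a *: mul x z + mul y z) /\
  (forall (a : F) (x y z : V), mul z (a *: x + y) = a *: mul z x + mul z y).

Definition polar (n : V -> F) (x y : V) : F := n (x + y) - n x - n y.

Definition quadratic_form (n : V -> F) : Prop :=
  (forall (a : F) (x : V), n (a *: x) = a ^+ 2 * n x) /\
  (forall (a : F) (x y z : V),
      polar n (a *: x + y) z = a * polar n x z + polar n y z).

Definition nondegenerate (n : V -> F) : Prop :=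
  forall x : V, (forall y : V, polar n x y = 0) -> x = 0.

Definition unital_composition_algebra (mul : V -> V -> V) (e : V) (n : V -> F)
  : Prop :=
  e != 0 /\
  [/\ bilinear_mul mul,
      (forall x, mul e x = x /\ mul x e = x),
      quadratic_form n,
      nondegenerate n &
      (forall x y, n (mul x y) = n x * n y)].

Definition split_norm (n : V -> F) : Prop := exists2 x : V, x != 0 & n x = 0.

Definition linear_op (R : V -> V) : Prop :=
  forall (a : F) (x y : V), R (a *: x + y) = a *: R x + R y.

Definition rota_baxter0 (mul : V -> V -> V) (R : V -> V) : Prop :=
  linear_op R /\
  forall x y, mul (R x) (R y) = R (mul (R x) y + mul x (R y)).

Definition nilpotent_of_index_le (R : V -> V) (k : nat) : Prop :=
  forall x, iter k R x = 0.

Definition rb_index (mul : V -> V -> V) (k : nat) : Prop :=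
  (forall R, rota_baxter0 mul R -> nilpotent_of_index_le R k) /\
  (forall m : nat, (forall R, rota_baxter0 mul R -> nilpotent_of_index_le R m)
     -> (k <= m)%N).

End CompositionAlgebra.

From HB Require Import structures.
From mathcomp Require Import all_boot all_order all_algebra.
From mathcomp Require Import ring.
From Stdlib Require Import Classical.
Set Implicit Arguments. Unset Strict Implicit. Unset Printing Implicit Defensive.
Import GRing.Theory.
Local Open Scope ring_scope.

(* Every x of a unital composition algebra satisfies x^2 = t(x) x - n(x) e,
   t(x) = <x, e>.  Applying a Rota-Baxter operator R to the linearization of
   this identity yields, for all x and y,
     t(y) R^2 x + t(x) R^2 y - (<Rx, y> + <x, Ry>) Re + <Rx, Ry> e = 0.
   With x = y = e this puts R^2 e in the span of Re and e, and with
   x = y = Re it gives two polynomial equations in t(Re), n(Re) whose only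
   solution in characteristic 0 is t(Re) = n(Re) = 0, so that R^2 e = 0; then
   y = e gives R^3 = 0.  Without isotropic vectors (or in dimension <= 2,
   where Re = 0) the identity with x = y forces R = 0.  Conversely, a split
   algebra of dimension > 2 contains an idempotent u of trace 1 and a nonzero
   a with u a = a, a u = 0, and x |-> <x, a> u + <x, e - u> a is a
   Rota-Baxter operator whose square x |-> <x, a> a is nonzero. *)

Section LinearMap.
Variables (F : fieldType) (U W : lmodType F) (f : U -> W).
Hypothesis f_lin : forall a x y, f (a *: x + y) = a *: f x + f y.

Lemma lin0 : f 0 = 0.
Proof. by apply: (addrI (f 0)); have := f_lin 1 0 0; rewrite !scale1r !addr0 => <-. Qed.
Lemma linD x y : f (x + y) = f x + f y.
Proof. by rewrite -{1}[x]scale1r f_lin scale1r. Qed.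
Lemma linZ a x : f (a *: x) = a *: f x.
Proof. by rewrite -[a *: x]addr0 f_lin lin0 addr0. Qed.
Lemma linN x : f (- x) = - f x.
Proof. by rewrite -scaleN1r linZ scaleN1r. Qed.
Lemma linB x y : f (x - y) = f x - f y.
Proof. by rewrite linD linN. Qed.
End LinearMap.

Section RotaBaxterIndex.
Variables (F : fieldType) (V : vectType F) (mul : V -> V -> V).

Lemma rb_indexP k :
  (forall R, rota_baxter0 mul R -> nilpotent_of_index_le R k.+1) ->
  (exists2 R, rota_baxter0 mul R & ~ nilpotent_of_index_le R k) ->
  rb_index mul k.+1.
Proof.
move=> nilR [R rbR notnilR]; split=> // m nilm; rewrite ltnNge.
apply/negP => le_m_k; apply: notnilR => x.
have iter0 j : iter j R 0 = 0 by elim: j => //= j ->; exact: lin0 rbR.1.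
by rewrite -(subnK le_m_k) iterD (nilm R rbR) iter0.
Qed.
End RotaBaxterIndex.

Lemma dim_le2_line_or_plane (F : fieldType) (V : vectType F) (e u : V) :
  (\dim {:V} <= 2)%N -> e != 0 ->
  (exists l, u = l *: e) \/ (forall y, exists a b, y = a *: e + b *: u).
Proof.
move=> dimV e0; have [/vlineP [l ->]|u_notin] := boolP (u \in <[e]>%VS).
  by left; exists l.
right => y; have full : (<[e]> + <[u]> == fullv)%VS.
  rewrite eqEdim subvf /=; apply: leq_trans dimV _.
  have : (\dim <[e]> < \dim (<[e]> + <[u]>))%N.
    rewrite (ltn_leqif (dimv_leqif_sup (addvSl _ _))); apply: contra u_notin.
    by move/subvP; apply; apply: subvP (addvSr _ _) _ (memv_line u).
  by rewrite dim_vline e0.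
have : y \in (<[e]> + <[u]>)%VS by rewrite (eqP full) memvf.
by case/memv_addP => _ /vlineP [a ->] [_ /vlineP [b ->] ->]; exists a, b.
Qed.

Lemma dim_gt2_notin_plane (F : fieldType) (V : vectType F) (e u : V) :
  (2 < \dim {:V})%N -> exists y, y \notin (<[e]> + <[u]>)%VS.
Proof.
move=> dimV; have [sub|/subvPn [y _ y_notin]] := boolP (fullv <= <[e]> + <[u]>)%VS;
  last by exists y.
have := leq_trans (dimvS sub) (dimv_add_leqif <[e]> <[u]>).1.
rewrite !dim_vline => le_dim; have := leq_trans dimV le_dim.
by case: (e != 0); case: (u != 0).
Qed.

Ltac zero_form h := move/eqP: h; rewrite -subr_eq0 => /eqP h.
Ltac lhs_of h := match type of h with ?l = _ => l end.
Ltac goal_as E := apply/eqP; rewrite -subr_eq0; apply/eqP; transitivity E; [ring|].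
(* [lincomb1 h c] proves an equation [L = R] of the goal as [L - R = c (L' - R')]
   for [h : L' = R'], checked by [ring]; likewise with two or three hypotheses. *)
Ltac lincomb1 h c := zero_form h; let E := lhs_of h in goal_as (c * E);
  by rewrite h mulr0.
Ltac lincomb2 h1 h2 c1 c2 := zero_form h1; zero_form h2;
  let E1 := lhs_of h1 in let E2 := lhs_of h2 in goal_as (c1 * E1 + c2 * E2);
  by rewrite h1 h2 !mulr0 addr0.
Ltac lincomb3 h1 h2 h3 c1 c2 c3 := zero_form h1; zero_form h2; zero_form h3;
  let E1 := lhs_of h1 in let E2 := lhs_of h2 in let E3 := lhs_of h3 in
  goal_as (c1 * E1 + c2 * E2 + c3 * E3); by rewrite h1 h2 h3 !mulr0 !addr0.

Section CompositionAlgebra.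
Variables (F : fieldType) (V : vectType F) (mul : V -> V -> V) (e : V) (n : V -> F).
Local Notation "x ** y" := (mul x y) (at level 40, left associativity).
Local Notation bf := (polar n).
Hypotheses (mul_linl : forall a x y z, (a *: x + y) ** z = a *: (x ** z) + y ** z)
  (mul_linr : forall a x y z, z ** (a *: x + y) = a *: (z ** x) + z ** y)
  (mul1x : forall x, e ** x = x) (mulx1 : forall x, x ** e = x)
  (nZ : forall a x, n (a *: x) = a ^+ 2 * n x)
  (polar_lin : forall a x y z, bf (a *: x + y) z = a * bf x z + bf y z)
  (nondeg : forall x, (forall y, bf x y = 0) -> x = 0)
  (nM : forall x y, n (x ** y) = n x * n y) (e_neq0 : e != 0).

Definition trace x := bf x e.
Definition conjugate x := trace x *: e - x.

Let mull_lin z : forall a x y, (a *: x + y) ** z = a *: (x ** z) + y ** z :=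
  fun a x y => mul_linl a x y z.
Let mulr_lin z : forall a x y, z ** (a *: x + y) = a *: (z ** x) + z ** y :=
  fun a x y => mul_linr a x y z.
(* Viewed in the regular module [F^o], so that the [lin*] lemmas apply. *)
Let polarl_lin z : forall a x y,
    (bf (a *: x + y) z : F^o) = a *: (bf x z : F^o) + (bf y z : F^o) :=
  fun a x y => polar_lin a x y z.

Lemma bmulDl x y z : (x + y) ** z = x ** z + y ** z.
Proof. exact: (linD (f := mul^~ z) (mull_lin z)). Qed.
Lemma bmulBl x y z : (x - y) ** z = x ** z - y ** z.
Proof. exact: (linB (f := mul^~ z) (mull_lin z)). Qed.
Lemma bmulNl x z : (- x) ** z = - (x ** z).
Proof. exact: (linN (f := mul^~ z) (mull_lin z)). Qed.
Lemma bmulZl a x z : (a *: x) ** z = a *: (x ** z).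
Proof. exact: (linZ (f := mul^~ z) (mull_lin z)). Qed.
Lemma bmul0l z : 0 ** z = 0.
Proof. exact: (lin0 (f := mul^~ z) (mull_lin z)). Qed.
Lemma bmulDr x y z : z ** (x + y) = z ** x + z ** y.
Proof. exact: (linD (f := mul z) (mulr_lin z)). Qed.
Lemma bmulBr x y z : z ** (x - y) = z ** x - z ** y.
Proof. exact: (linB (f := mul z) (mulr_lin z)). Qed.
Lemma bmulNr x z : z ** (- x) = - (z ** x).
Proof. exact: (linN (f := mul z) (mulr_lin z)). Qed.
Lemma bmulZr a x z : z ** (a *: x) = a *: (z ** x).
Proof. exact: (linZ (f := mul z) (mulr_lin z)). Qed.
Lemma bmul0r z : z ** 0 = 0.
Proof. exact: (lin0 (f := mul z) (mulr_lin z)). Qed.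

Lemma polarC x y : bf x y = bf y x.
Proof. by rewrite /polar (addrC x y); ring. Qed.
Lemma polarDl x y z : bf (x + y) z = bf x z + bf y z.
Proof. exact: (linD (f := fun t => bf t z : F^o) (polarl_lin z)). Qed.
Lemma polarBl x y z : bf (x - y) z = bf x z - bf y z.
Proof. exact: (linB (f := fun t => bf t z : F^o) (polarl_lin z)). Qed.
Lemma polarNl x z : bf (- x) z = - bf x z.
Proof. exact: (linN (f := fun t => bf t z : F^o) (polarl_lin z)). Qed.
Lemma polarZl a x z : bf (a *: x) z = a * bf x z.
Proof. exact: (linZ (f := fun t => bf t z : F^o) (polarl_lin z)). Qed.
Lemma polar0l z : bf 0 z = 0.
Proof. exact: (lin0 (f := fun t => bf t z : F^o) (polarl_lin z)). Qed.
Lemma polarDr x y z : bf z (x + y) = bf z x + bf z y.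
Proof. by rewrite !(polarC z) polarDl. Qed.
Lemma polarBr x y z : bf z (x - y) = bf z x - bf z y.
Proof. by rewrite !(polarC z) polarBl. Qed.
Lemma polarNr x z : bf z (- x) = - bf z x.
Proof. by rewrite !(polarC z) polarNl. Qed.
Lemma polarZr a x z : bf z (a *: x) = a * bf z x.
Proof. by rewrite !(polarC z) polarZl. Qed.
Lemma polar0r z : bf z 0 = 0.
Proof. by rewrite polarC polar0l. Qed.

Ltac polar_simpl := repeat progress rewrite ?polarDl ?polarBl ?polarNl ?polarZl
  ?polar0l ?polarDr ?polarBr ?polarNr ?polarZr ?polar0r.
Ltac polar_simpl_in h := repeat progress rewrite ?polarDl ?polarBl ?polarNl
  ?polarZl ?polar0l ?polarDr ?polarBr ?polarNr ?polarZr ?polar0r in h.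
Ltac bmul_simpl := repeat progress rewrite ?bmulDl ?bmulBl ?bmulNl ?bmulZl ?bmul0l
  ?bmulDr ?bmulBr ?bmulNr ?bmulZr ?bmul0r.
(* Replace a vector equation [h] by its polar pairing with [w], expanded. *)
Ltac pair_with h w := move: (congr1 (fun v => bf v w) h) => /=; clear h => h;
  polar_simpl; polar_simpl_in h.

Lemma normD x y : n (x + y) = n x + n y + bf x y. Proof. rewrite /polar; ring. Qed.
Lemma polarxx x : bf x x = 2 * n x.
Proof. by rewrite /polar -[x + x]mulr2n -scaler_nat nZ; ring. Qed.

Lemma polar_eq x y : (forall w, bf x w = bf y w) -> x = y.
Proof. by move=> eq_xy; apply/subr0_eq/nondeg => w; rewrite polarBl eq_xy subrr. Qed.

Lemma exists_polar_neq0 x : x != 0 -> exists y, bf x y != 0.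
Proof.
move=> /eqP x_neq0; apply: NNPP => no_y; apply/x_neq0/nondeg => y.
by have [//|polar_neq0] := eqVneq (bf x y) 0; case: no_y; exists y.
Qed.

Lemma norm_unit : n e = 1.
Proof.
have ne2 := nM e e; rewrite mul1x in ne2.
have /eqP : n e * (n e - 1) = 0 by rewrite mulrBr mulr1 -ne2 subrr.
rewrite mulf_eq0 subr_eq0 => /orP [/eqP ne0|/eqP //].
case/negP: e_neq0; apply/eqP/nondeg => y.
have n0 x : n x = 0 by rewrite -[x]mul1x nM ne0 mul0r.
by rewrite /polar !n0; ring.
Qed.

Lemma polar_ee : bf e e = 2.
Proof. by rewrite polarxx norm_unit mulr1. Qed.

Lemma polar_mull p q w : bf (p ** q) (p ** w) = n p * bf q w.
Proof. rewrite /polar -bmulDr !nM; ring. Qed.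
Lemma polar_mulr p q w : bf (q ** p) (w ** p) = bf q w * n p.
Proof. rewrite /polar -bmulDl !nM; ring. Qed.

Lemma polar_mull_linearized p q r s :
  bf (p ** q) (r ** s) + bf (r ** q) (p ** s) = bf p r * bf q s.
Proof.
have h := polar_mull (p + r) q s.
rewrite !bmulDl !polarDl !polarDr !polar_mull normD in h; lincomb1 h (1:F).
Qed.
Lemma polar_mulr_linearized p q r s :
  bf (q ** p) (s ** r) + bf (q ** r) (s ** p) = bf p r * bf q s.
Proof.
have h := polar_mulr (p + r) q s.
rewrite !bmulDr !polarDl !polarDr !polar_mulr normD in h; lincomb1 h (1:F).
Qed.

Lemma polar_mul_adjl p q s : bf (p ** q) s = bf q (conjugate p ** s).
Proof.
have h := polar_mull_linearized p q e s; rewrite !mul1x in h.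
rewrite /conjugate bmulBl bmulZl mul1x polarBr polarZr /trace; lincomb1 h (1:F).
Qed.
Lemma polar_mul_adjr p q s : bf (q ** p) s = bf q (s ** conjugate p).
Proof.
have h := polar_mulr_linearized p q e s; rewrite !mulx1 in h.
rewrite /conjugate bmulBr bmulZr mulx1 polarBr polarZr /trace; lincomb1 h (1:F).
Qed.

Lemma trace_conjugate p : trace (conjugate p) = trace p.
Proof. rewrite /conjugate /trace; polar_simpl; rewrite polar_ee; ring. Qed.
Lemma conjugateK p : conjugate (conjugate p) = p.
Proof.
apply: polar_eq => w; rewrite {1}/conjugate trace_conjugate /conjugate.
polar_simpl; ring.
Qed.

Lemma conjugate_mulKl p q : conjugate p ** (p ** q) = n p *: q.
Proof. by apply: polar_eq => w; rewrite polar_mul_adjl conjugateK polar_mull polarZl. Qed.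
Lemma conjugate_mulKr p q : (q ** p) ** conjugate p = n p *: q.
Proof.
by apply: polar_eq => w; rewrite polar_mul_adjr conjugateK polar_mulr polarZl mulrC.
Qed.

Lemma mul_linearized_quadratic p q :
  p ** q + q ** p = trace p *: q + trace q *: p - bf p q *: e.
Proof.
apply: polar_eq => w.
have h1 := polar_mull_linearized p q e w; have h2 := polar_mull_linearized q p e w.
have h3 := polar_mull_linearized p e q w.
rewrite !mul1x !mulx1 in h1 h2 h3; polar_simpl; rewrite /trace.
lincomb3 h1 h2 h3 (1:F) (1:F) (-1:F).
Qed.

Lemma mul_quadratic p : p ** p = trace p *: p - n p *: e.
Proof.
apply: polar_eq => w.
have h1 := polar_mull_linearized p p e w; have h2 := polar_mull p e w.
rewrite !mul1x !mulx1 in h1 h2; polar_simpl; rewrite /trace.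
lincomb2 h1 h2 (1:F) (-1:F).
Qed.

Lemma isotropic_scale_unit l : n (l *: e) = 0 -> l *: e = 0.
Proof. by rewrite nZ norm_unit mulr1 => /eqP; rewrite sqrf_eq0 => /eqP ->; rewrite scale0r. Qed.

Lemma eq0_dim_le2 x : (\dim {:V} <= 2)%N -> trace x = 0 -> n x = 0 -> x = 0.
Proof.
move=> dimV tx0 nx0; case: (dim_le2_line_or_plane x dimV e_neq0) => [[l xE]|plane].
  by move: nx0; rewrite xE; apply: isotropic_scale_unit.
apply: nondeg => y; have [a [b ->]] := plane y; polar_simpl.
by move: tx0; rewrite /trace => ->; rewrite polarxx nx0; ring.
Qed.

Lemma rb0 : rota_baxter0 mul (fun _ => 0).
Proof. by split=> [a x y|x y]; rewrite ?scaler0 ?addr0 ?bmul0l. Qed.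

Section PeirceWitness.
Variables u a : V.
Hypotheses (uu : u ** u = u) (tu : trace u = 1) (nu : n u = 0)
  (ua : u ** a = a) (au : a ** u = 0).
Local Notation ubar := (conjugate u).

Lemma conjugate_idem : ubar = e - u.
Proof. by rewrite /conjugate tu scale1r. Qed.
Lemma norm_a : n a = 0. Proof. by rewrite -ua nM nu mul0r. Qed.
Lemma mul_ubar_a : ubar ** a = 0.
Proof. by rewrite conjugate_idem bmulBl mul1x ua subrr. Qed.
Lemma mul_a_ubar : a ** ubar = a.
Proof. by rewrite conjugate_idem bmulBr mulx1 au subr0. Qed.
Lemma mul_ubar_ubar : ubar ** ubar = ubar.
Proof. by rewrite conjugate_idem bmulBl !bmulBr !mul1x !mulx1 uu subrr subr0. Qed.
Lemma polar_u_a : bf u a = 0.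
Proof. by rewrite -{1}(mulx1 u) polar_mul_adjl mul_ubar_a polar0r. Qed.
Lemma trace_a : trace a = 0.
Proof.
have h := mul_linearized_quadratic u a; rewrite ua au addr0 in h.
pair_with h e; rewrite /trace polar_u_a in h *; rewrite [bf u e]tu in h; lincomb1 h (-1:F).
Qed.
Lemma conjugate_a : conjugate a = - a.
Proof. by rewrite /conjugate trace_a scale0r sub0r. Qed.
Lemma mul_a_a : a ** a = 0.
Proof. by rewrite mul_quadratic trace_a norm_a !scale0r subrr. Qed.

Lemma polar_umul_a y : bf (u ** y) a = 0.
Proof. by rewrite polar_mul_adjl mul_ubar_a polar0r. Qed.
Lemma polar_amul_a y : bf (a ** y) a = 0.
Proof. by rewrite -{2}(mulx1 a) polar_mull norm_a mul0r. Qed.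
Lemma polar_mulu_a x : bf (x ** u) a = bf x a.
Proof. by rewrite polar_mul_adjr mul_a_ubar. Qed.
Lemma polar_mula_a x : bf (x ** a) a = 0.
Proof. by rewrite -{2}(mul1x a) polar_mulr norm_a mulr0. Qed.
Lemma polar_umul_ubar y : bf (u ** y) ubar = bf y ubar.
Proof. by rewrite polar_mul_adjl mul_ubar_ubar. Qed.
Lemma polar_amul_ubar y : bf (a ** y) ubar = - bf y a.
Proof. by rewrite polar_mul_adjl conjugate_a bmulNl mul_a_ubar polarNr. Qed.
Lemma polar_mulu_ubar x : bf (x ** u) ubar = bf x ubar.
Proof. by rewrite polar_mul_adjr mul_ubar_ubar. Qed.
Lemma polar_mula_ubar x : bf (x ** a) ubar = 0.
Proof. by rewrite polar_mul_adjr conjugate_a bmulNr mul_ubar_a oppr0 polar0r. Qed.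

Definition peirce_rb x := bf x a *: u + bf x ubar *: a.

Lemma peirce_rb_rota_baxter : rota_baxter0 mul peirce_rb.
Proof.
split=> [c x y|x y]; apply: polar_eq => w; rewrite /peirce_rb; first by polar_simpl; ring.
bmul_simpl; rewrite uu ua au mul_a_a.
(* keep [ubar] folded so that [polar_simpl] does not expand it *)
move: polar_umul_ubar polar_amul_ubar polar_mulu_ubar polar_mula_ubar.
move: (conjugate u) => ub ub1 ub2 ub3 ub4; polar_simpl.
by rewrite ?polar_umul_a ?polar_amul_a ?polar_mulu_a ?polar_mula_a ?ub1 ?ub2 ?ub3 ?ub4; ring.
Qed.

Lemma peirce_rb2 y : peirce_rb (peirce_rb y) = bf y a *: a.
Proof.
have u_ubar : bf u ubar = 1.
  by rewrite conjugate_idem polarBr polarxx nu -/(trace u) tu; ring.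
have a_ubar : bf a ubar = 0.
  by rewrite conjugate_idem polarBr -/(trace a) trace_a polarC polar_u_a subrr.
apply: polar_eq => w; rewrite /peirce_rb; move: u_ubar a_ubar.
move: (conjugate u) => ub u_ub a_ub; polar_simpl.
by rewrite polar_u_a u_ub a_ub polarxx norm_a; ring.
Qed.

Lemma peirce_rb2_neq0 : a != 0 -> ~ nilpotent_of_index_le peirce_rb 2.
Proof.
move=> a_neq0 nil2; move/eqP: (a_neq0); apply; apply: nondeg => y; rewrite polarC.
by apply/eqP; have /eqP := nil2 y; rewrite /= peirce_rb2 scaler_eq0 (negPf a_neq0) orbF.
Qed.
End PeirceWitness.

Lemma exists_isotropic_idempotent :
  split_norm n -> exists u, [/\ u ** u = u, trace u = 1 & n u = 0].
Proof.
case=> x x_neq0 nx0; have [y xy_neq0] := exists_polar_neq0 x_neq0.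
pose u := (bf x y)^-1 *: (x ** conjugate y).
have tu : trace u = 1.
  by rewrite /u /trace polarZl polar_mul_adjr conjugateK mul1x mulVf.
have nu : n u = 0 by rewrite /u nZ nM nx0 !mul0r mulr0.
by exists u; split=> //; rewrite mul_quadratic tu nu scale1r scale0r subr0.
Qed.

Lemma idempotent_orthogonal u z : u ** u = u -> trace u = 1 -> n u = 0 ->
  bf z e = 0 -> bf z u = 0 -> u ** z + z ** u = z.
Proof.
move=> uu tu nu ze zu; rewrite mul_linearized_quadratic tu polarC zu.
by rewrite /trace ze scale1r !scale0r addr0 subr0.
Qed.

Lemma exists_peirce_pair : split_norm n -> (2 < \dim {:V})%N ->
  exists u a, a != 0 /\ [/\ u ** u = u, trace u = 1, n u = 0, u ** a = a & a ** u = 0].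
Proof.
move=> /exists_isotropic_idempotent [u [uu tu nu]] dimV.
have [y y_notin] := dim_gt2_notin_plane e u dimV.
(* the component of y orthogonal to both e and u *)
pose z := y - bf y u *: e - (bf y e - 2 * bf y u) *: u.
have tu' : bf u e = 1 := tu.
have z_neq0 : z != 0.
  apply: contra y_notin => /eqP z0.
  have -> : y = z + (bf y e - 2 * bf y u) *: u + bf y u *: e by rewrite /z !subrK.
  by rewrite z0 add0r addrC memv_add ?memvZ ?memv_line.
have ze : bf z e = 0 by rewrite /z; polar_simpl; rewrite polar_ee tu'; ring.
have zu : bf z u = 0 by rewrite /z; polar_simpl; rewrite polarxx nu (polarC e) tu'; ring.
have uz_zu := idempotent_orthogonal uu tu nu ze zu.
have [uz0|uz_neq0] := eqVneq (u ** z) 0.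
  exists (e - u), z; split=> //; split.
  - by rewrite bmulBl !bmulBr !mul1x !mulx1 uu subrr subr0.
  - by rewrite /trace polarBl polar_ee tu'; ring.
  - by rewrite -scaleN1r normD nZ norm_unit nu polarZr polarC tu'; ring.
  - by rewrite bmulBl mul1x uz0 subr0.
  - by rewrite bmulBr mulx1 -{1}uz_zu uz0 add0r subrr.
exists u, (u ** z); split=> //; split=> //.
- have /eqP := conjugate_mulKl u z.
  by rewrite conjugate_idem // nu scale0r bmulBl mul1x subr_eq0 eq_sym => /eqP.
- have /eqP := conjugate_mulKr u z.
  rewrite conjugate_idem // nu scale0r bmulBr mulx1 subr_eq0 eq_sym => /eqP zu_u.
  have uzE : u ** z = z - z ** u by rewrite -{2}uz_zu addrK.
  by rewrite uzE bmulBl zu_u subrr.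
Qed.

Section Char0.
Hypothesis char0 : [pchar F] =i pred0.

Lemma natf_succ_neq0 k : (k.+1)%:R != 0 :> F.
Proof. by rewrite ((pcharf0P F).1 char0). Qed.
Lemma natf_mul_eq0 k (x : F) : k.+1%:R * x = 0 -> x = 0.
Proof. by move/eqP; rewrite mulf_eq0 (negPf (natf_succ_neq0 k)) => /eqP. Qed.

Ltac lincomb1f h c := zero_form h; let E := lhs_of h in
  apply/eqP; rewrite -subr_eq0; apply/eqP; transitivity (c * E);
  [field; by rewrite ?natf_succ_neq0 | by rewrite h mulr0].

Section RotaBaxter.
Variable R : V -> V.
Hypothesis R_lin : linear_op R.
Hypothesis R_rb : forall x y, R x ** R y = R (R x ** y + x ** R y).

Let RD := linD R_lin.
Let RB := linB R_lin.
Let RN := linN R_lin.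
Let RZ := linZ R_lin.
Let R0 := lin0 R_lin.
Ltac R_simpl_in h := repeat progress rewrite ?RD ?RB ?RN ?RZ ?R0 in h.

Lemma rb_linearized_quadratic x y :
  trace y *: R (R x) + trace x *: R (R y) - (bf (R x) y + bf x (R y)) *: R e
  + bf (R x) (R y) *: e = 0.
Proof.
have h := mul_linearized_quadratic (R x) (R y); rewrite !R_rb -RD in h.
have sumE : (R x ** y + x ** R y) + (R y ** x + y ** R x) =
    trace (R x) *: y + trace y *: R x - bf (R x) y *: e
    + (trace x *: R y + trace (R y) *: x - bf x (R y) *: e).
  apply: polar_eq => w; have h1 := mul_linearized_quadratic (R x) y.
  have h2 := mul_linearized_quadratic x (R y).
  pair_with h1 w; pair_with h2 w; lincomb2 h1 h2 (1:F) (1:F).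
rewrite sumE in h; R_simpl_in h.
apply: nondeg => w; pair_with h w; rewrite /trace in h *; lincomb1 h (1:F).
Qed.

Lemma RRe_span : R (R e) = (trace (R e) / 2) *: R e - (n (R e) / 2) *: e.
Proof.
apply: polar_eq => w; have h := rb_linearized_quadratic e e; pair_with h w.
rewrite [trace e]polar_ee polarxx (polarC e) in h; rewrite /trace in h *.
lincomb1f h (1/4:F).
Qed.

Lemma trace_norm_Re : trace (R e) = 0 /\ n (R e) = 0.
Proof.
have h := rb_linearized_quadratic (R e) (R e).
rewrite RRe_span in h; R_simpl_in h; rewrite RRe_span in h.
have h' := h; pair_with h e; pair_with h' (R e).
rewrite /trace polar_ee !polarxx (polarC e) in h h'.
set t := bf (R e) e in h h'; set m := n (R e) in h h'.
have eq1 : t ^+ 4 - 6 * t ^+ 2 * m + 2 * m ^+ 2 = 0 by lincomb1f h (2:F).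
have eq2 : t * m * (t ^+ 2 - 7 * m) = 0 by lincomb1f h' (2:F).
have sqr_eq0 (x : F) : x ^+ 2 = 0 -> x = 0 by move/eqP; rewrite sqrf_eq0 => /eqP.
suff [t0 m0] : t = 0 /\ m = 0 by [].
move/eqP: eq2; rewrite !mulf_eq0 => /orP[/orP[/eqP t0|/eqP m0]|].
- by split=> //; apply/sqr_eq0/(natf_mul_eq0 (k := 1)); rewrite -eq1 t0; ring.
- by split=> //; apply/sqr_eq0/sqr_eq0; rewrite -eq1 m0; ring.
- rewrite subr_eq0 => /eqP t2E.
  have m0 : m = 0.
    by apply/sqr_eq0/(natf_mul_eq0 (k := 8)); rewrite -eq1 -[4%N]/(2 + 2)%N exprD t2E; ring.
  by split=> //; apply: sqr_eq0; rewrite t2E m0 mulr0.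
Qed.

Lemma RRe_eq0 : R (R e) = 0.
Proof. by rewrite RRe_span trace_norm_Re.1 trace_norm_Re.2 !mul0r !scale0r subrr. Qed.

Lemma rb_cube_eq0 y : R (R (R y)) = 0.
Proof.
have h := rb_linearized_quadratic y (R e).
rewrite RRe_eq0 R0 trace_norm_Re.1 in h.
have Ry_Re w : bf (R y) (R e) * bf (R e) w = 0.
  have h1 := h; pair_with h1 w; rewrite /trace in h1; polar_simpl_in h1.
  lincomb1 h1 (-1:F).
have h2 := congr1 R (rb_linearized_quadratic y e); R_simpl_in h2.
rewrite RRe_eq0 R0 in h2; apply: nondeg => w; pair_with h2 w.
rewrite [trace e]polar_ee in h2; have := Ry_Re w.
by move=> h3; apply: (natf_mul_eq0 (k := 1)); lincomb2 h2 h3 (1:F) (-1:F).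
Qed.

Section ReZero.
Hypothesis Re0 : R e = 0.

Lemma RR_Re0 y : R (R y) = 0.
Proof.
have h := rb_linearized_quadratic y e; rewrite Re0 R0 in h.
apply: nondeg => w; pair_with h w; rewrite [trace e]polar_ee in h.
by apply: (natf_mul_eq0 (k := 1)); lincomb1 h (1:F).
Qed.

Lemma norm_R_Re0 y : n (R y) = 0.
Proof.
have h := rb_linearized_quadratic y y; rewrite Re0 RR_Re0 in h.
pair_with h e; rewrite polarxx polar_ee in h.
by apply: (natf_mul_eq0 (k := 3)); lincomb1 h (1:F).
Qed.
End ReZero.

Lemma rb_eq0_anisotropic : ~ split_norm n -> forall y, R y = 0.
Proof.
move=> anisotropic; have n0_eq0 x : n x = 0 -> x = 0.
  by move=> nx0; have [//|x_neq0] := eqVneq x 0; case: anisotropic; exists x.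
by move=> y; apply/n0_eq0/norm_R_Re0/n0_eq0; exact: trace_norm_Re.2.
Qed.

Lemma rb_eq0_dim_le2 : (\dim {:V} <= 2)%N -> forall y, R y = 0.
Proof.
move=> dimV y; have Re0 : R e = 0 by apply: eq0_dim_le2; case: trace_norm_Re.
case: (dim_le2_line_or_plane (R y) dimV e_neq0) => [[l RyE]|plane].
  by rewrite RyE isotropic_scale_unit // -RyE norm_R_Re0.
have [a [b ->]] := plane y.
by rewrite RD !RZ Re0 RR_Re0 // !scaler0 addr0.
Qed.
End RotaBaxter.

Lemma rb_index_anisotropic_or_dim_le2 :
  ~ split_norm n \/ (\dim {:V} <= 2)%N -> rb_index mul 1.
Proof.
move=> hyp; apply: rb_indexP => [R [R_lin R_rb] x|].
  by case: hyp => [anisotropic|dimV]; [exact: rb_eq0_anisotropic | exact: rb_eq0_dim_le2].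
by exists (fun _ => 0); [exact: rb0 | move/(_ e)/eqP; exact/negP].
Qed.

Lemma rb_index_split_dim_gt2 : split_norm n -> (2 < \dim {:V})%N -> rb_index mul 3.
Proof.
move=> split dimV; apply: rb_indexP => [R [R_lin R_rb] x|]; first exact: rb_cube_eq0.
have [u [a [a_neq0 [uu tu nu ua au]]]] := exists_peirce_pair split dimV.
by exists (peirce_rb u a); [exact: peirce_rb_rota_baxter | exact: peirce_rb2_neq0].
Qed.
End Char0.
End CompositionAlgebra.

Unset Implicit Arguments. Set Strict Implicit.
Theorem mainTheorem20 (F : fieldType) (charF0 : [pchar F] =i pred0)
  (V : vectType F) (mul : V -> V -> V) (e : V) (n : V -> F)
  (HC : unital_composition_algebra mul e n) :
  ((~ split_norm n \/ (\dim {: V} <= 2)%N) -> rb_index mul 1) /\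
  (split_norm n /\ (\dim {: V} = 4 \/ \dim {: V} = 8)%N -> rb_index mul 3).
Proof.
case: HC => e_neq0 [[mul_linl mul_linr] unit [nZ polar_lin] nondeg nM].
have mul1x x : mul e x = x := (unit x).1.
have mulx1 x : mul x e = x := (unit x).2.
split=> [hyp | [split dimV]]; first exact: rb_index_anisotropic_or_dim_le2.
by apply: rb_index_split_dim_gt2 => //; case: dimV => ->.
Qed.
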